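(* Fix an angle $0<\theta\le\pi/8$ and, for an angle $\alpha$, let $\phi_\alpha=\cos(\alpha)|0\rangle+\sin(\alpha)|1\rangle$. Define $\phi_{0,0}=\phi_{-\theta}$, $\phi_{0,1}=\phi_{\theta}$, $\phi_{1,0}=\phi_{\pi/2-\theta}$, $\phi_{1,1}=\phi_{\pi/2+\theta}$. Consider the bit escrow protocol with the reveal challenge: in the deposit step an honest Alice with bit $b$ picks a uniformly random $x\in\{0,1\}$ and sends the qubit $\phi_{b,x}$ to Bob; in the reveal step Alice sends the classical bits $b$ and $x$ to Bob, who measures the deposited qubit in the basis $\{\phi_{0,x},\phi_{1,x}\}$ and sets his result $r_B=b$ if the outcome is $\phi_{b,x}$ and $r_B=err$ otherwise. Then for every $\epsilon\ge 0$ this protocol is $\left(\epsilon,\ \gamma=\frac{2\sqrt{\epsilon}}{\cos(2\theta)}\right)$ binding.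
   Context: Binding is defined for two-step protocols of the following form. Deposit: Alice prepares an arbitrary joint state $\psi_{AB}$ of quantum registers $A$ and $B$ (here $B$ is one qubit) and sends $B$ to Bob, keeping $A$. Reveal: Alice and Bob communicate, Bob follows the protocol honestly and Alice is arbitrary; Alice has one reveal strategy (the ''zero strategy'') which she uses if she wants to bias the result towards $0$ and another (the ''one strategy'') for biasing towards $1$, both starting from the same deposited state. Bob decides on a result $r_B\in\{0,1,err\}$. Let $p_0$ (resp. $p_1$) be the probability that, under the zero strategy, Alice claims the bit is $0$ (resp. $1$), and $p_{err}$ the probability that $r_B=err$ under the zero strategy; define $q_0,q_1,q_{err}$ likewise for the one strategy. The protocol is $(\epsilon,\gamma)$ binding if, whenever Bob is honest, for any strategy of Alice, $p_{err}\le\epsilon$ and $q_{err}\le\epsilon$ imply $|p_0-q_0|\le\gamma$ and $|p_1-q_1|\le\gamma$. Classical bits that Alice sends as qubits are measured by Bob in the computational basis. *)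

From mathcomp Require Import all_boot all_algebra complex mxtens.
From mathcomp Require Import reals trigo.
Set Implicit Arguments. Unset Strict Implicit. Unset Printing Implicit Defensive.
Import GRing.Theory Num.Theory.
Local Open Scope ring_scope.

Section Defs.
Variable R : realType.
Notation C := R[i].

Definition adjmx m n (A : 'M[C]_(m, n)) : 'M[C]_(n, m) := (map_mx Num.conj A)^T.

(* positive semidefinite (over C this entails Hermitian) *)
Definition psd m (A : 'M[C]_m) : Prop :=
  forall v : 'cV[C]_m, 0 <= (adjmx v *m A *m v) 0 0.

Definition density m (rho : 'M[C]_m) : Prop := psd rho /\ \tr rho = 1.

Definition povm4 n (M : bool -> bool -> 'M[C]_n) : Prop :=
  (forall b x, psd (M b x)) /\ \sum_(b : bool) \sum_(x : bool) M b x = 1%:M.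

Definition phi_ang (a : R) : 'cV[C]_2 :=
  \col_(i < 2) (if i == ord0 then ((cos a)%:C)%C else ((sin a)%:C)%C).

Definition proj (v : 'cV[C]_2) : 'M[C]_2 := v *m adjmx v.

Definition phi_bx (theta : R) (b x : bool) : 'cV[C]_2 :=
  match b, x with
  | false, false => phi_ang (- theta)
  | false, true  => phi_ang theta
  | true,  false => phi_ang (pi / 2 - theta)
  | true,  true  => phi_ang (pi / 2 + theta)
  end.

Definition prob m (rho : 'M[C]_m) (E : 'M[C]_m) : R := complex.Re (\tr (E *m rho)).

(* Joint state rho on A (x) B (A of dimension n, B one qubit).  Alice's reveal
   strategy is a POVM M on A whose outcome (b, x) are the classical bits she
   sends; Bob measures B in the basis {phi_{0,x}, phi_{1,x}}. *)

Definition claim_prob n (rho : 'M[C]_(n * 2)) (M : bool -> bool -> 'M[C]_n)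
  (b : bool) : R :=
  \sum_(x : bool) prob rho (M b x *t (1%:M : 'M[C]_2)).

(* probability that Bob's result is err: Alice sent (b, x) and Bob obtained
   phi_{~b, x} *)
Definition err_prob (theta : R) n (rho : 'M[C]_(n * 2))
  (M : bool -> bool -> 'M[C]_n) : R :=
  \sum_(b : bool) \sum_(x : bool) prob rho (M b x *t proj (phi_bx theta (~~ b) x)).

Definition binding (theta eps gamma : R) : Prop :=
  forall (n : nat) (rho : 'M[C]_(n * 2)) (M0 M1 : bool -> bool -> 'M[C]_n),
    density rho -> povm4 M0 -> povm4 M1 ->
    err_prob theta rho M0 <= eps -> err_prob theta rho M1 <= eps ->
    `|claim_prob rho M0 false - claim_prob rho M1 false| <= gamma /\
    `|claim_prob rho M0 true - claim_prob rho M1 true| <= gamma.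

End Defs.

From mathcomp Require Import all_boot all_order all_algebra complex mxtens.
From mathcomp Require Import reals trigo.
From mathcomp Require Import spectral sesquilinear ring lra.
Import Order.TTheory GRing.Theory Num.Theory.
Local Open Scope ring_scope.

Set Implicit Arguments. Unset Strict Implicit. Unset Printing Implicit Defensive.

(* The expectation of the observable Z = |0><0| - |1><1| on Bob's qubit,
   <Z> = prob rho (1 (x) Z), is fixed by the deposited state, hence is the same
   for both reveal strategies.  For a claim (b, x) with effect M_bx, let e, t
   and z be the probabilities of M_bx (x) |phi_{~b,x}><phi_{~b,x}|, M_bx (x) 1
   and M_bx (x) Z.  As phi_{~b,x} is orthogonal to phi_{b,x} and
   <phi_{b,x}|Z|phi_{b,x}> = (-1)^b cos 2theta, the operator
   l^2 |phi_{~b,x}><phi_{~b,x}| + l m (Z - (-1)^b cos 2theta) + m^2 is a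
   nonnegative combination of two rank-one projections, so l^2 e + l m (z - (-1)^b cos(2theta) t) + m^2 t >= 0 for all real
   l, m.  Summing over (b, x) and taking the discriminant yields
   (<Z> - cos(2theta) (p0 - p1))^2 <= 4 err; two strategies with error at most
   eps thus give values of cos(2theta) (p0 - p1) within 4 sqrt eps of each
   other, and p0 + p1 = 1 concludes. *)

Lemma sumr_bool (V : nmodType) (F : bool -> V) : \sum_b F b = F true + F false.
Proof. exact: big_bool. Qed.

Lemma quad_form_ge0_discr (F : realFieldType) (a x e : F) :
  (forall l m, 0 <= l ^+ 2 * a + l * m * x + m ^+ 2 * e) -> x ^+ 2 <= 4 * a * e.
Proof.
move=> q; have a_ge0 : 0 <= a.
  by have := q 1 0; rewrite expr1n mul1r mulr0 mul0r expr0n mul0r !addr0.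
have [a0|a_neq0] := eqVneq a 0; first by have := q (- (e + 1)) x; rewrite a0; nra.
have a_gt0 : 0 < a by rewrite lt0r a_neq0.
by have := q x (- 2 * a); nra.
Qed.

Lemma quad_form_sum (F : numDomainType) (I : finType) (a w t : I -> F) l m :
  (forall i, 0 <= l ^+ 2 * a i + l * m * w i + m ^+ 2 * t i) ->
  0 <= l ^+ 2 * \sum_i a i + l * m * \sum_i w i + m ^+ 2 * \sum_i t i.
Proof.
by move=> q; rewrite !mulr_sumr -!big_split; apply: sumr_ge0 => i _; apply: q.
Qed.

Lemma sqr_le4_norm (F : rcfType) (x eps : F) :
  x ^+ 2 <= 4 * eps -> `|x| <= 2 * Num.sqrt eps.
Proof.
have sqrt4 : Num.sqrt 4 = 2 :> F.
  by rewrite (_ : 4 = 2 ^+ 2) ?sqrtr_sqr ?normr_nat // -natrX.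
by move=> le_x; rewrite -sqrtr_sqr -sqrt4 -sqrtrM ?ler0n //; apply: ler_wsqrtr.
Qed.

Lemma binding_gap (F : rcfType) (k z p0 p1 q0 q1 eps : F) : 0 < k ->
  p0 + p1 = 1 -> q0 + q1 = 1 ->
  (z - k * (p0 - p1)) ^+ 2 <= 4 * eps -> (z - k * (q0 - q1)) ^+ 2 <= 4 * eps ->
  `|p0 - q0| <= 2 * Num.sqrt eps / k /\ `|p1 - q1| <= 2 * Num.sqrt eps / k.
Proof.
move=> k_gt0 p01 q01.
have -> : p1 = 1 - p0 by lra.
have -> : q1 = 1 - q0 by lra.
move=> /sqr_le4_norm le_p /sqr_le4_norm le_q.
suff gap0 : `|p0 - q0| <= 2 * Num.sqrt eps / k.
  have -> : 1 - p0 - (1 - q0) = - (p0 - q0) by ring.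
  by rewrite normrN.
rewrite ler_pdivlMr // -[k]gtr0_norm // -normrM.
move: le_p le_q; rewrite !ler_norml => /andP[p_lo p_hi] /andP[q_lo q_hi].
apply/andP; split; nra.
Qed.

Section TensorProduct.
Variable K : comPzRingType.

Lemma tensmxDl m n p q (A B : 'M[K]_(m, n)) (D : 'M[K]_(p, q)) :
  (A + B) *t D = A *t D + B *t D.
Proof. by apply/matrixP=> i j; rewrite !mxE mulrDl. Qed.

Lemma tensmxDr m n p q (A : 'M[K]_(m, n)) (B D : 'M[K]_(p, q)) :
  A *t (B + D) = A *t B + A *t D.
Proof. by apply/matrixP=> i j; rewrite !mxE mulrDr. Qed.

Lemma tensmxZr m n p q (A : 'M[K]_(m, n)) (B : 'M[K]_(p, q)) a :
  A *t (a *: B) = a *: (A *t B).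
Proof. by apply/matrixP=> i j; rewrite !mxE mulrCA. Qed.

Lemma tensmx_suml m n p q (I : finType) (F : I -> 'M[K]_(m, n)) (B : 'M[K]_(p, q)) :
  (\sum_i F i) *t B = \sum_i (F i *t B).
Proof.
apply: (big_morph (fun A => A *t B)) => [A D|]; first exact: tensmxDl.
exact: tens0mx.
Qed.

Lemma tensmx11 m p : (1%:M : 'M[K]_m) *t (1%:M : 'M[K]_p) = 1%:M.
Proof.
apply/matrixP=> k l.
case: (mxtens_indexP k) => i j; case: (mxtens_indexP l) => i' j'.
rewrite tensmxE !mxE (inj_eq (can_inj (@mxtens_indexK _ _))) xpair_eqE.
by case: (i == i'); case: (j == j'); rewrite ?mulr1 ?mul0r ?mulr0.
Qed.

End TensorProduct.

Section PositiveSemidefinite.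
Variable R : realType.
Local Notation C := R[i].

Lemma adjmxD m n (A B : 'M[C]_(m, n)) : adjmx (A + B) = adjmx A + adjmx B.
Proof. by apply/matrixP=> i j; rewrite !mxE rmorphD. Qed.

Lemma adjmxZ m n a (A : 'M[C]_(m, n)) : adjmx (a *: A) = a^* *: adjmx A.
Proof. by apply/matrixP=> i j; rewrite !mxE rmorphM. Qed.

Lemma adjmxK m n (A : 'M[C]_(m, n)) : adjmx (adjmx A) = A.
Proof. by apply/matrixP=> i j; rewrite !mxE conjCK. Qed.

Lemma adjmxM m n p (A : 'M[C]_(m, n)) (B : 'M[C]_(n, p)) :
  adjmx (A *m B) = adjmx B *m adjmx A.
Proof. by rewrite /adjmx map_mxM trmx_mul. Qed.

Definition sesqform m (A : 'M[C]_m) (u v : 'cV[C]_m) : C := (adjmx u *m A *m v) 0 0.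

Lemma sesqformDZ m (A : 'M[C]_m) u w a :
  sesqform A (u + a *: w) (u + a *: w) =
  sesqform A u u + a * sesqform A u w + a^* * sesqform A w u
  + a^* * a * sesqform A w w.
Proof.
rewrite /sesqform adjmxD adjmxZ !mulmxDl !mulmxDr -!scalemxAl -!scalemxAr.
by rewrite !mxE; ring.
Qed.

Lemma sesqform_delta m (A : 'M[C]_m) i j :
  sesqform A (delta_mx i 0) (delta_mx j 0) = A i j.
Proof.
rewrite /sesqform mxE (bigD1 j) //= big1 ?addr0; last first.
  by move=> k /negPf nk; rewrite [delta_mx j 0 k 0]mxE nk mulr0.
rewrite [delta_mx j 0 j 0]mxE !eqxx mulr1 mxE (bigD1 i) //= big1 ?addr0; last first.
  by move=> k /negPf nk; rewrite !mxE nk /= rmorph0 mul0r.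
by rewrite !mxE !eqxx /= rmorph1 mul1r.
Qed.

Lemma psd_entry_conj m (A : 'M[C]_m) : psd A -> forall i j, A j i = (A i j)^*.
Proof.
move=> psdA i j.
(* Polarization: the form is real at e_i + e_j and at e_i + 'i e_j. *)
have realE v : (sesqform A v v)^* = sesqform A v v by apply/CrealP/ger0_real/psdA.
have pol a : sesqform A (delta_mx i 0 + a *: delta_mx j 0) (delta_mx i 0 + a *: delta_mx j 0)
    = A i i + A j j + (a * A i j + a^* * A j i) + (a^* * a - 1) * A j j.
  by rewrite sesqformDZ !sesqform_delta; ring.
have hii := realE (delta_mx i 0); have hjj := realE (delta_mx j 0).
rewrite sesqform_delta in hii; rewrite sesqform_delta in hjj.
have sumE := realE (delta_mx i 0 + 1 *: delta_mx j 0).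
have idiffE := realE (delta_mx i 0 + 'i *: delta_mx j 0).
rewrite pol conjC1 mulr1 subrr mul0r addr0 !mul1r !rmorphD /= hii hjj in sumE.
rewrite pol conjCi !mulNr mulCii opprK subrr mul0r addr0 !rmorphD /= hii hjj in idiffE.
move/addrI: sumE => sumE; move/addrI: idiffE => idiffE.
have diffE : 'i * ((A j i)^* - (A i j)^*) = 'i * (A i j - A j i).
  by rewrite mulrBr mulrBr -idiffE rmorphN !rmorphM /= conjCi; ring.
have twiceE : 2 * (A j i)^* = 2 * A i j.
  transitivity (((A i j)^* + (A j i)^*) + ((A j i)^* - (A i j)^*)); first by ring.
  by rewrite sumE (mulfI (neq0Ci C) diffE); ring.
by rewrite -[A j i]conjCK (mulfI _ twiceE) // pnatr_eq0.
Qed.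

Lemma psd_hermsymmx m (A : 'M[C]_m) : psd A -> A \is hermsymmx.
Proof.
move=> psdA; apply/is_hermitianmxP; rewrite expr0 scale1r.
by apply/matrixP=> i j; rewrite !mxE (psd_entry_conj psdA).
Qed.

Lemma sesqform_row_adj m (A P : 'M[C]_m) k :
  sesqform A (adjmx (row k P)) (adjmx (row k P)) = (P *m A *m adjmx P) k k.
Proof.
rewrite /sesqform adjmxK !mxE; apply: eq_bigr => l _; rewrite !mxE.
by congr (_ * _); apply: eq_bigr => j _; rewrite !mxE.
Qed.

Lemma mxtrace_psd_mul_ge0 m (A B : 'M[C]_m) : psd A -> psd B -> 0 <= \tr (A *m B).
Proof.
move=> psdA psdB.
(* With B = P^* diag d P, tr (A B) = sum_k d_k (P A P^* )_kk, and both factors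
   are values of nonnegative quadratic forms. *)
have /hermitian_normalmx /orthomx_spectralP eB := psd_hermsymmx psdB.
set P := spectralmx B in eB; set d := spectral_diag B in eB.
have uP : P \is unitarymx by apply: spectral_unitarymx.
have PP : P *m adjmx P = 1%:M by rewrite /adjmx map_trmx; apply/unitarymxP.
rewrite invmx_unitary // -map_trmx -/(adjmx P) in eB.
have dE k : d 0 k = (P *m B *m adjmx P) k k.
  by rewrite [in RHS]eB !mulmxA PP mul1mx -!mulmxA PP mulmx1 mxE eqxx mulr1n.
rewrite eB mulmxA mxtrace_mulC !mulmxA /mxtrace.
apply: sumr_ge0 => k _; rewrite mul_mx_diag mxE dE -!sesqform_row_adj.
exact: mulr_ge0 (psdA _) (psdB _).
Qed.

Lemma psd_mulmx_adjmx m p (K : 'M[C]_(m, p)) N : psd N -> psd (K *m N *m adjmx K).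
Proof. by move=> psdN v; have := psdN (adjmx K *m v); rewrite adjmxM adjmxK !mulmxA. Qed.

(* [1%:M (x) w] with [n] columns: [1%:M *t w] has [n * 1] columns, which is not
   convertible to [n]. *)
Definition tens_col n p (w : 'cV[C]_p) : 'M[C]_(n * p, n) :=
  \matrix_(k, i) (((mxtens_unindex k).1 == i)%:R * w (mxtens_unindex k).2 0).

Lemma tensmx_outer n p (M : 'M[C]_n) (w : 'cV[C]_p) :
  M *t (w *m adjmx w) = tens_col n w *m M *m adjmx (tens_col n w).
Proof.
have sum_delta q (a : 'I_q) (F : 'I_q -> C) : \sum_i ((a == i)%:R * F i) = F a.
  rewrite (bigD1 a) //= eqxx mul1r big1 ?addr0 // => i /negPf ni.
  by rewrite eq_sym ni mul0r.
apply/matrixP=> k l; rewrite !mxE.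
under eq_bigr => j _ do rewrite !mxE.
rewrite big_ord1.
under [RHS]eq_bigr => j _ do rewrite !mxE.
under [RHS]eq_bigr => j _ do under eq_bigr => i _ do rewrite !mxE -mulrA.
under [RHS]eq_bigr => j _ do rewrite sum_delta rmorphM rmorph_nat mulrCA.
by rewrite sum_delta; ring.
Qed.

Lemma psd_tensmx_outer n p (M : 'M[C]_n) (w : 'cV[C]_p) :
  psd M -> psd (M *t (w *m adjmx w)).
Proof. by move=> psdM; rewrite tensmx_outer; apply: psd_mulmx_adjmx. Qed.

End PositiveSemidefinite.

Section Probability.
Variable R : realType.
Local Notation C := R[i].

Lemma probD m (rho A B : 'M[C]_m) : prob rho (A + B) = prob rho A + prob rho B.
Proof. by rewrite /prob mulmxDl mxtraceD; case: (\tr _); case: (\tr _). Qed.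

Lemma probZ m (rho A : 'M[C]_m) r : prob rho (r%:C%C *: A) = r * prob rho A.
Proof. by rewrite /prob -scalemxAl mxtraceZ; case: (\tr _) => a b /=; ring. Qed.

Lemma prob_sum m (rho : 'M[C]_m) (I : finType) (F : I -> 'M[C]_m) :
  prob rho (\sum_i F i) = \sum_i prob rho (F i).
Proof. by apply: (big_morph _ (probD rho)); rewrite /prob mul0mx mxtrace0. Qed.

Lemma prob1 m (rho : 'M[C]_m) : density rho -> prob rho 1%:M = 1.
Proof. by case=> _ tr1; rewrite /prob mul1mx tr1. Qed.

Lemma prob_tensmx_outer_ge0 n p (rho : 'M[C]_(n * p)) (M : 'M[C]_n) (w : 'cV[C]_p) :
  density rho -> psd M -> 0 <= prob rho (M *t (w *m adjmx w)).
Proof.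
case=> psd_rho _ psdM.
have := mxtrace_psd_mul_ge0 (psd_tensmx_outer w psdM) psd_rho.
by rewrite /prob lecE /= => /andP[_].
Qed.

Lemma prob_povm_sum n (rho : 'M[C]_(n * 2)) M (A : 'M[C]_2) : povm4 M ->
  \sum_(b : bool) \sum_(x : bool) prob rho (M b x *t A) = prob rho (1%:M *t A).
Proof.
case=> _ <-; rewrite tensmx_suml prob_sum.
by apply: eq_bigr => b _; rewrite tensmx_suml prob_sum.
Qed.

Lemma claim_prob_sum1 n (rho : 'M[C]_(n * 2)) M : density rho -> povm4 M ->
  claim_prob rho M false + claim_prob rho M true = 1.
Proof.
move=> rho1 povmM.
by rewrite -(prob1 rho1) -tensmx11 -(prob_povm_sum _ _ povmM) sumr_bool addrC.
Qed.

End Probability.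

Section Qubit.
Variable R : realType.
Local Notation C := R[i].

Definition pauliZ : 'M[C]_2 :=
  \matrix_(i, j) ((i == j)%:R * (if i == ord0 then 1 else -1)).

(* With u = phi_ang b and v = phi_ang (b + pi / 2),
   Z + cos (2 b) = 2 cos (2 b) u u^* - sin (2 b) (u v^* + v u^* );
   completing the square in the resulting 2 x 2 form gives the certificate. *)
Lemma pauliZ_sos b l m :
  (l ^+ 2)%:C%C *: proj (phi_ang b)
  + (l * m)%:C%C *: (pauliZ + (cos (2 * b))%:C%C *: 1%:M) + (m ^+ 2)%:C%C *: 1%:M =
  proj (m%:C%C *: phi_ang (b + pi / 2) - (l * sin (2 * b))%:C%C *: phi_ang b)
  + ((l * cos (2 * b) + m) ^+ 2)%:C%C *: proj (phi_ang b).
Proof.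
have cos2E : cos (2 * b) = cos b ^+ 2 - sin b ^+ 2.
  by rewrite mulr2n mulrDl mul1r cosD; ring.
have sin2E : sin (2 * b) = 2 * sin b * cos b.
  by rewrite mulr2n mulrDl mul1r sinD; ring.
have sin2cos2 : sin b ^+ 2 = 1 - cos b ^+ 2 by rewrite -(cos2Dsin2 b); ring.
have conjR (x : R) : (x%:C%C)^* = x%:C%C :> C := conjc_real x.
apply/matrixP => i j; rewrite ![in LHS]mxE ![in RHS]mxE !(mxE, big_ord1).
rewrite cosDpihalf sinDpihalf cos2E sin2E.
case: i => [[|[|//]]] ?; case: j => [[|[|//]]] ? /=.
all: rewrite -?(rmorphM, rmorphB, rmorphD, rmorphN) ?conjR.
all: apply/eqP; rewrite eq_complex /=; apply/andP; split; apply/eqP; ring: sin2cos2.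
Qed.

End Qubit.

Arguments pauliZ {R}.

Section PositiveFunctional.
Variable R : realType.
Local Notation C := R[i].
Variable f : 'M[C]_2 -> R.
Hypothesis fD : {morph f : A B / A + B}.
Hypothesis fZ : forall r A, f (r%:C%C *: A) = r * f A.
Hypothesis f_proj_ge0 : forall v, 0 <= f (proj v).

Lemma pauliZ_quad_ge0 b l m :
  0 <= l ^+ 2 * f (proj (phi_ang b)) + l * m * (f pauliZ + cos (2 * b) * f 1%:M)
       + m ^+ 2 * f 1%:M.
Proof.
have := congr1 f (pauliZ_sos b l m).
have := f_proj_ge0 (phi_ang b).
have := f_proj_ge0 (m%:C%C *: phi_ang (b + pi / 2) - (l * sin (2 * b))%:C%C *: phi_ang b).
(* Abstracting the matrices keeps the rewrites below from unfolding them. *)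
move: (proj _) (proj _) pauliZ (1%:M : 'M[C]_2) => P Q Z I P_ge0 Q_ge0.
rewrite !fD !fZ fD fZ => ->.
by apply: addr_ge0 => //; apply: mulr_ge0 => //; apply: sqr_ge0.
Qed.

End PositiveFunctional.

Section BitEscrow.
Variable R : realType.
Local Notation C := R[i].
Variable theta : R.

Definition phi_angle (b x : bool) : R :=
  match b, x with
  | false, false => - theta
  | false, true  => theta
  | true,  false => pi / 2 - theta
  | true,  true  => pi / 2 + theta
  end.

Lemma phi_bxE b x : phi_bx theta b x = phi_ang (phi_angle b x).
Proof. by case: b; case: x. Qed.

Lemma cos2_phi_angle b x : cos (2 * phi_angle b x) = (-1) ^+ b * cos (2 * theta).
Proof.
have pi2 : 2 * (pi / 2) = pi :> R by rewrite mulrC -mulrA mulVf ?mulr1 ?pnatr_eq0.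
case: b; case: x; rewrite ?expr1 ?expr0 /=.
- by rewrite mulrDr pi2 cosD cospi sinpi; ring.
- by rewrite mulrBr pi2 cosB cospi sinpi; ring.
- by rewrite mul1r.
- by rewrite mulrN cosN mul1r.
Qed.

Lemma err_prob_bound n (rho : 'M[C]_(n * 2)) M : density rho -> povm4 M ->
  (prob rho (1%:M *t pauliZ)
   - cos (2 * theta) * (claim_prob rho M false - claim_prob rho M true)) ^+ 2
  <= 4 * err_prob theta rho M.
Proof.
move=> rho1 povmM; have [psdM _] := povmM.
have sum_t : \sum_b \sum_x prob rho (M b x *t 1%:M) = 1.
  by rewrite sumr_bool addrC; apply: claim_prob_sum1.
have sum_w : \sum_b \sum_x (prob rho (M b x *t pauliZ)
      - (-1) ^+ b * cos (2 * theta) * prob rho (M b x *t 1%:M))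
    = prob rho (1%:M *t pauliZ)
      - cos (2 * theta) * (claim_prob rho M false - claim_prob rho M true).
  rewrite (eq_bigr (fun b => \sum_x prob rho (M b x *t pauliZ)
                   - (-1) ^+ b * cos (2 * theta) * claim_prob rho M b)); last first.
    by move=> b _; rewrite sumrB -mulr_sumr.
  rewrite sumrB (prob_povm_sum _ _ povmM) sumr_bool expr1 expr0; congr (_ - _).
  by move: (claim_prob _ _ _) (claim_prob _ _ _) => p1 p0; ring.
rewrite -[4 * _]mulr1; apply: quad_form_ge0_discr => l m.
rewrite -[X in m ^+ 2 * X]sum_t -sum_w.
apply: quad_form_sum => b; apply: quad_form_sum => x.
have := @pauliZ_quad_ge0 R (fun A => prob rho (M b x *t A))
  (fun A B => etrans (congr1 _ (tensmxDr _ _ _)) (probD _ _ _))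
  (fun r A => etrans (congr1 _ (tensmxZr _ _ _)) (probZ _ _ _))
  (fun v => prob_tensmx_outer_ge0 v rho1 (psdM b x)) (phi_angle (~~ b) x) l m.
by rewrite -phi_bxE cos2_phi_angle signrN !mulNr.
Qed.

End BitEscrow.

Theorem theorem5 (R : realType) (theta : R) :
  0 < theta -> theta <= pi / 8 ->
  forall eps : R, 0 <= eps ->
  binding theta eps (2 * Num.sqrt eps / cos (2 * theta)).
Proof.
move=> theta_gt0 theta_le eps _ n rho M0 M1 rho1 povmM0 povmM1 err0 err1.
have cos_gt0 : 0 < cos (2 * theta).
  have pi_gt0 := @pi_gt0 R.
  by apply: cos_gt0_pihalf; apply/andP; split; lra.
apply: (binding_gap cos_gt0 (claim_prob_sum1 rho1 povmM0) (claim_prob_sum1 rho1 povmM1)).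
- by apply: le_trans (err_prob_bound theta rho1 povmM0) _; lra.
- by apply: le_trans (err_prob_bound theta rho1 povmM1) _; lra.
Qed.
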